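(* Let $f$ be a complex polynomial of degree $d>1$ and let $K(f)=\{z\in\mathbb{C}:(f^k(z))_k \text{ is bounded}\}$ be its filled-in Julia set. Then the sequence of iterates $(f^k)_{k\ge1}$, where $f^k=f\circ\cdots\circ f$ ($k$ times), centers on $K(f)$.
   Context: Definition (centering): Let $C\subset\mathbb{C}$ be non-empty and compact. A sequence of polynomials $(q_k)_k$ centers on $C$ if there exist $R>0$ and $k_0$ such that (1) all zeros of $q_k$ lie in $\mathbb{D}(0,R)$ for $k\ge k_0$; (2) for every closed $L\subset\mathbb{C}$ with $L\cap C=\emptyset$ there is $M(L)$ such that the number of zeros of $q_k$ in $L$ (with multiplicity) is at most $M(L)$ for $k\ge k_0$. *)

From HB Require Import structures.
From mathcomp Require Import all_boot all_order all_algebra.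
From mathcomp Require Import reals.
From mathcomp Require Import complex.
Set Implicit Arguments. Unset Strict Implicit. Unset Printing Implicit Defensive.
Import Order.TTheory GRing.Theory Num.Theory.
Local Open Scope ring_scope.
Local Open Scope complex_scope.

Section Defs.
Variable R : realType.
Notation C := (complex R).

Definition closedC (L : C -> Prop) : Prop :=
  forall z : C, (forall e : R, 0 < e -> exists w, L w /\ `|z - w| < e%:C) -> L z.

Definition poly_iter (f : {poly C}) (k : nat) : {poly C} :=
  iter k (fun p => f \Po p) 'X.

Definition filled_julia (f : {poly C}) (z : C) : Prop :=
  exists B : R, forall k : nat, `|iter k (fun w => f.[w]) z| <= B%:C.

(* "the number of zeros of q in L, counted with multiplicity, is at most M":
   for every finite set of distinct points of L, the sum of multiplicities
   of q at these points is at most M. *)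
Definition nzeros_in_le (q : {poly C}) (L : C -> Prop) (M : nat) : Prop :=
  forall s : seq C, uniq s -> (forall x, x \in s -> L x) ->
    (\sum_(x <- s) mup x q <= M)%N.

Definition centers_on (q : nat -> {poly C}) (C0 : C -> Prop) : Prop :=
  exists Rad : R, 0 < Rad /\ exists k0 : nat,
    (forall k, (k0 <= k)%N -> forall z, root (q k) z -> `|z| < Rad%:C) /\
    (forall L : C -> Prop, closedC L -> (forall z, L z -> ~ C0 z) ->
       exists M : nat, forall k, (k0 <= k)%N -> nzeros_in_le (q k) L M).
End Defs.

(* Outside a large disk D(0, T) a polynomial f of degree d >= 2 at least
   doubles the modulus, so an orbit that leaves the disk escapes and never
   returns to 0; hence all zeros of all iterates lie in D(0, T).  If L is closed
   and disjoint from K(f), only finitely many iterates vanish on L: otherwise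
   zeros in L of iterates of arbitrarily high order accumulate, by compactness
   of L inside D(0, T), at a point w of L; w escapes, so |f^N| > T on a whole
   neighbourhood of w and no f^k with k >= N vanishes there.  The finitely many
   remaining iterates contribute at most their degrees. *)

From Pilot Require Import Defs.
From HB Require Import structures.
From mathcomp Require Import all_boot all_order all_algebra.
From mathcomp Require Import reals complex.
From mathcomp Require Import boolp classical_sets topology normedtype.
From mathcomp Require Import zify lra.
Set Implicit Arguments.
Unset Strict Implicit.
Unset Printing Implicit Defensive.
Import Order.TTheory GRing.Theory Num.Theory.
Import numFieldNormedType.Exports.
Local Open Scope ring_scope.
Local Open Scope complex_scope.

Local Notation normc := Normc.normc.

Lemma mup_poly0 (F : fieldType) (x : F) : mup x (0 : {poly F}) = 0%N.
Proof.
by apply/eqP; rewrite -leqn0 -ltnS -[X in (_ < X.+1)%N](size_poly0 F) ltn_ord.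
Qed.

Lemma sum_mup_le_size (F : fieldType) (s : seq F) (q : {poly F}) :
  uniq s -> (\sum_(x <- s) mup x q <= (size q).-1)%N.
Proof.
have [-> _|] := eqVneq q 0; first by rewrite big1 // => x _; exact: mup_poly0.
elim: s q => [|x s IH] q q0 /=; first by rewrite big_nil.
case/andP=> xs us; rewrite big_cons.
have [m [r]] := multiplicity_XsubC q x; rewrite q0 /= => rx qE.
have r0 : r != 0 by apply: contraNneq rx => ->; rewrite root0.
have Xm0 : ('X - x%:P) ^+ m != 0 by rewrite expf_neq0 // polyXsubC_eq0.
have -> : mup x q = m by rewrite qE mupMr // mup_XsubCX eqxx.
have -> : (\sum_(y <- s) mup y q = \sum_(y <- s) mup y r)%N.
  rewrite big_seq_cond [RHS]big_seq_cond; apply: eq_bigr => y /andP[ys _].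
  rewrite qE mupM // mup_XsubCX; case: eqP => [exy|]; last by rewrite addn0.
  by rewrite exy ys in xs.
have := IH r r0 us; have : (0 < size r)%N by rewrite size_poly_gt0.
rewrite qE size_Mmonic ?monic_exp ?monicXsubC // size_exp_XsubC.
move: (\sum_(y <- s) mup y r)%N => S.
case: (size r) => // n _; rewrite addnS /=; lia.
Qed.

Section ComplexNorm.
Context {R : rcfType}.
Implicit Types (z : R[i]) (r : R).

Lemma normr_complex z : `|z| = (normc z)%:C.
Proof. by case: z. Qed.

Lemma ler_normc z r : (`|z| <= r%:C) = (normc z <= r).
Proof. by rewrite normr_complex lecR. Qed.

Lemma ltr_normc z r : (`|z| < r%:C) = (normc z < r).
Proof. by rewrite normr_complex ltcR. Qed.

Lemma normc_ge0 z : 0 <= normc z.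
Proof. by case: z => a b; exact: sqrtr_ge0. Qed.

Lemma normcX z n : normc (z ^+ n) = normc z ^+ n.
Proof.
by elim: n => [|n IH]; rewrite ?Normc.normc1 // !exprS Normc.normcM IH.
Qed.

Lemma normc_sum (I : Type) (s : seq I) (F : I -> R[i]) :
  normc (\sum_(i <- s) F i) <= \sum_(i <- s) normc (F i).
Proof. exact: (@ler_norm_sum R (Rcomplex R)). Qed.

Lemma normc_Re z : `|complex.Re z| <= normc z.
Proof.
by case: z => a b /=; rewrite -sqrtr_sqr ler_wsqrtr // lerDl sqr_ge0.
Qed.

Lemma normc_Im z : `|complex.Im z| <= normc z.
Proof.
by case: z => a b /=; rewrite -sqrtr_sqr ler_wsqrtr // lerDr sqr_ge0.
Qed.

Lemma normc_le_Re_Im z : normc z <= `|complex.Re z| + `|complex.Im z|.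
Proof.
case: z => a b /=; have ab0 : 0 <= `|a| + `|b| by rewrite addr_ge0.
rewrite -(ger0_norm ab0) -(sqrtr_sqr (`|a| + `|b|)); apply: ler_wsqrtr.
have := normr_ge0 a; have := normr_ge0 b.
rewrite -(real_normK (num_real a)) -(real_normK (num_real b)); nra.
Qed.

Lemma normc_horner_le (p : {poly R[i]}) z :
  normc p.[z] <= \sum_(i < size p) normc p`_i * normc z ^+ i.
Proof.
rewrite horner_coef; apply: le_trans (normc_sum _ _) _.
by apply: ler_sum => i _; rewrite Normc.normcM normcX.
Qed.

End ComplexNorm.

Section PolynomialEstimates.
Variable R : rcfType.

Lemma poly_escape (f : {poly R[i]}) : (1 < (size f).-1)%N ->
  exists T : R, 1 <= T /\ forall z, T < normc z -> 2 * normc z <= normc f.[z].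
Proof.
move=> hd; set d := (size f).-1 in hd.
have sf : size f = d.+1 by move: hd; rewrite /d; case: (size f).
have f0 : f != 0 by rewrite -size_poly_gt0 sf.
have lc0 : 0 < normc f`_d.
  rewrite lt_def normc_ge0 andbT; apply: contra_neq f0 => /Normc.eq0_normc.
  by move/eqP; rewrite -lead_coefE lead_coef_eq0 => /eqP.
set a := normc f`_d in lc0.
set S := \sum_(i < d) normc f`_i.
have S0 : 0 <= S by apply: sumr_ge0 => i _; exact: normc_ge0.
have q0 : 0 <= (S + 2) / a by apply: divr_ge0; [lra | exact: ltW].
exists (1 + (S + 2) / a); split; first lra.
move=> z hz; set r := normc z in hz *.
(* the radius is chosen so that [a r >= S + 2]: the leading term dominates *)
have r1 : 1 <= r by lra.
have Sa : S + 2 <= a * r.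
  by rewrite -ler_pdivrMl // mulrC; apply: ltW; apply: le_lt_trans hz; lra.
rewrite horner_coef sf big_ord_recr /=.
set A := \sum_(i < d) _.
have hA : normc A <= S * r ^+ d.-1.
  apply: le_trans (normc_sum _ _) _; rewrite /S big_distrl /=.
  apply: ler_sum => i _; rewrite Normc.normcM normcX.
  apply: ler_wpM2l; first exact: normc_ge0.
  by apply: ler_weXn2l => //; have := ltn_ord i; rewrite /d; lia.
have hlead : normc (f`_d * z ^+ d) = a * r * r ^+ d.-1.
  by rewrite Normc.normcM normcX -mulrA -exprS prednK //; lia.
have htri : normc (f`_d * z ^+ d) <= normc (A + f`_d * z ^+ d) + normc A.
  by have := le_normcD (A + f`_d * z ^+ d) (- A); rewrite normcN addrC addKr.
have hr : r <= r ^+ d.-1 by rewrite -{1}(expr1 r); apply: ler_weXn2l => //; lia.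
nra.
Qed.

Lemma horner_subr_normc_le (p : {poly R[i]}) y : exists2 Q : R, 0 <= Q &
  forall x, normc (x - y) <= 1 -> normc (p.[x] - p.[y]) <= Q * normc (x - y).
Proof.
have [q hq] : exists q, p - p.[y]%:P = q * ('X - y%:P).
  by apply/factor_theorem; rewrite /root !hornerE subrr.
exists (\sum_(i < size q) normc q`_i * (normc y + 1) ^+ i).
  by apply: sumr_ge0 => i _; rewrite mulr_ge0 ?exprn_ge0 ?addr_ge0 ?normc_ge0.
move=> x hx; have -> : p.[x] - p.[y] = q.[x] * (x - y).
  by have := congr1 (horner^~ x) hq; rewrite !hornerE.
rewrite Normc.normcM ler_wpM2r ?normc_ge0 //.
apply: le_trans (normc_horner_le _ _) _; apply: ler_sum => i _.
rewrite ler_wpM2l ?normc_ge0 // lerXn2r ?qualifE /= ?addr_ge0 ?normc_ge0 //.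
by have := le_normcD (x - y) y; rewrite subrK; lra.
Qed.

Lemma horner_normc_gt_near (p : {poly R[i]}) y (T : R) : T < normc p.[y] ->
  exists2 e : R, 0 < e & forall x, normc (x - y) < e -> T < normc p.[x].
Proof.
move=> hT; have [Q Q0 hQ] := horner_subr_normc_le p y.
have Qg0 : 0 < Q + 1 + (normc p.[y] - T) by lra.
exists ((normc p.[y] - T) / (Q + 1 + (normc p.[y] - T))) => [|x].
  by rewrite divr_gt0 //; lra.
rewrite ltr_pdivlMr // => hx; have nxy0 := normc_ge0 (x - y).
have nxy1 : normc (x - y) < 1 by nra.
have := hQ x (ltW nxy1).
have := le_normcD p.[x] (p.[y] - p.[x]); rewrite addrC subrK -opprB normcN.
nra.
Qed.

End PolynomialEstimates.

Lemma compact_seq_cluster (T : topologicalType) (A : set T) (u : nat -> T) :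
  compact A -> (forall n, A (u n)) ->
  exists p : T, forall U, nbhs p U -> forall N, exists2 n, (N <= n)%N & U (u n).
Proof.
move=> cA Au; have uA : (u @ \oo)%classic A by exists 0%N => // n _; exact: Au.
have [p [_ clp]] := cA _ _ uA.
exists p => U pU N.
have uN : (u @ \oo)%classic [set u n | n in [set n | (N <= n)%N]]%classic.
  by exists N => // n /= Nn; exists n.
by have [_ [[n Nn <-] Uun]] := clp _ _ uN pU; exists n.
Qed.

Lemma bounded_seq_cluster (R : realType) (u : nat -> R[i]) (B : R) :
  (forall n, normc (u n) <= B) ->
  exists w, forall e, 0 < e -> forall N, exists2 n, (N <= n)%N &
    normc (u n - w) < e.
Proof.
move=> uB; pose v n := (complex.Re (u n), complex.Im (u n)).
have cB : compact (`[- B, B] `*` `[- B, B])%classic.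
  by apply: compact_setX; exact: segment_compact.
have vB n : (`[- B, B] `*` `[- B, B])%classic (v n).
  split; rewrite /= in_itv /= -ler_norml; apply: le_trans (uB n).
    exact: normc_Re.
  exact: normc_Im.
have [[a b] hab] := compact_seq_cluster cB vB.
exists (a +i* b) => e e0 N; have e20 : 0 < e / 2 by lra.
have [n Nn [/= ha hb]] := hab _ (nbhsx_ballx _ _ e20) N.
exists n => //; apply: le_lt_trans (normc_le_Re_Im _) _.
move: ha hb; rewrite /ball /= (distrC a) (distrC b).
by case: (u n) => x y /=; lra.
Qed.

Section ZeroCounting.
Variable R : realType.
Implicit Types (q : {poly R[i]}) (L : R[i] -> Prop).

Lemma nzeros_in_le_size q L : nzeros_in_le q L (size q).-1.
Proof. by move=> s us _; exact: sum_mup_le_size. Qed.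

Lemma nzeros_in_le_nroot q L :
  (forall z, L z -> ~~ root q z) -> nzeros_in_le q L 0.
Proof.
move=> Lq s _ sL; rewrite big1_seq // => x /andP[_ xs].
exact/mupNroot/Lq/sL.
Qed.

Lemma nzeros_in_le_leq q L m n :
  (m <= n)%N -> nzeros_in_le q L m -> nzeros_in_le q L n.
Proof. by move=> mn qm s us sL; apply: leq_trans mn; exact: qm. Qed.

End ZeroCounting.

Section EscapingOrbits.
Variables (R : realType) (f : {poly R[i]}) (T : R).
Local Notation orbit k z := (iter k (fun w => f.[w]) z).
Hypothesis T_ge0 : 0 <= T.
Hypothesis f_escape : forall z, T < normc z -> 2 * normc z <= normc f.[z].

Lemma horner_poly_iter k z : (poly_iter f k).[z] = orbit k z.
Proof. by elim: k => [|k IH]; rewrite /= ?hornerX // horner_comp IH. Qed.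

Lemma orbit_escape z j : T < normc z -> T < normc (orbit j z).
Proof.
by move=> hz; elim: j => [|j IH] //=; have := f_escape IH; move: T_ge0; lra.
Qed.

Lemma orbit_neq0 z N j : T < normc (orbit N z) -> (N <= j)%N -> orbit j z != 0.
Proof.
move=> hN /subnK <-; rewrite iterD; apply/eqP => h.
by have := orbit_escape (j - N) hN; rewrite h Normc.normc0; move: T_ge0; lra.
Qed.

Lemma orbit_escapes_of_not_filled z :
  ~ filled_julia f z -> exists N, T < normc (orbit N z).
Proof.
move=> nK; apply: contrapT => hn; apply: nK; exists T => k.
by rewrite ler_normc leNgt; apply/negP => hk; apply: hn; exists k.
Qed.

Lemma root_poly_iter_normc_le k z : root (poly_iter f k) z -> normc z <= T.
Proof.
rewrite leNgt; apply: contraL => hz; rewrite /root horner_poly_iter.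
exact: (orbit_neq0 (N := 0) hz (leq0n k)).
Qed.

Lemma poly_iter_eventually_nroot L : Defs.closedC L ->
  (forall z, L z -> ~ filled_julia f z) ->
  exists k1, forall k, (k1 <= k)%N ->
    forall z, L z -> ~~ root (poly_iter f k) z.
Proof.
move=> Lcl LK; apply: contrapT => noK.
have late n : exists p : nat * R[i],
    [/\ (n <= p.1)%N, L p.2 & root (poly_iter f p.1) p.2].
  apply: contrapT => hn; apply: noK; exists n => k nk z Lz.
  by apply/negP => r; apply: hn; exists (k, z).
have [g hg] := choice late.
have [w hw] : exists w, forall e, 0 < e -> forall N, exists2 n, (N <= n)%N &
    normc ((g n).2 - w) < e.
  apply: (bounded_seq_cluster (B := T)) => n.
  by have [_ _ /root_poly_iter_normc_le] := hg n.
have Lw : L w.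
  apply: Lcl => e e0; have [n _ hn] := hw _ e0 0%N.
  have [_ Lgn _] := hg n; exists (g n).2; split => //.
  by rewrite ltr_normc -normcN opprB.
have [N] := orbit_escapes_of_not_filled (LK w Lw).
rewrite -horner_poly_iter => /horner_normc_gt_near[e e0 near_w].
have [n Nn /near_w] := hw _ e0 N; rewrite horner_poly_iter => hN.
have [kn _] := hg n; rewrite /root horner_poly_iter.
by rewrite (negbTE (orbit_neq0 hN (leq_trans Nn kn))).
Qed.

End EscapingOrbits.

Theorem mainTheorem10 (R : realType) (f : {poly complex R}) :
  (1 < (size f).-1)%N ->
  centers_on (fun k => poly_iter f k.+1) (filled_julia f).
Proof.
move=> hd; have [T [T1 f_escape]] := poly_escape hd.
have T0 : 0 <= T by lra.
exists (T + 1); split; first lra.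
exists 0%N; split=> [k _ z /(root_poly_iter_normc_le T0 f_escape) zT|L Lcl LK].
  by rewrite ltr_normc; lra.
have [k1 hk1] := poly_iter_eventually_nroot T0 f_escape Lcl LK.
pose M := (\sum_(j < k1) (size (poly_iter f j.+1)).-1)%N.
exists M => k _; have [kk1|k1k] := ltnP k k1.
  have le_M : ((size (poly_iter f k.+1)).-1 <= M)%N.
    by rewrite /M (bigD1 (Ordinal kk1)) //= leq_addr.
  exact: nzeros_in_le_leq le_M (nzeros_in_le_size (L := L) _).
apply: nzeros_in_le_leq (leq0n _) (nzeros_in_le_nroot _) => z.
exact: hk1 (leqW k1k) z.
Qed.
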